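(* Fix $\varepsilon>0$, $\beta\in(0,1)$, an even integer $d>4(e^{2\varepsilon}-1)^2\ln\frac2\beta$, and $\varepsilon$-private randomizers $R_1,\dots,R_n:[d]\to\mathcal Y$. Let $v=(e^{2\varepsilon}-1)\sqrt{\frac4d\ln\frac2\beta}$. If $H$ is chosen uniformly among subsets of $[d]$ of size $d/2$, then with probability at least $5/6$ over $H$, \[ \forall i\in[n]:\quad \Pr\left[R_i(\mathbf U)\in \mathit{Leak}(v,H,R_i)\right]<6\beta n . \]
   Context: $\mathcal Y$ is a countable message set. A randomizer $R:[d]\to\mathcal Y$ is $\varepsilon$-private if for all $x,x'\in[d]$ and all $Y\subseteq\mathcal Y$, $\Pr[R(x)\in Y]\le e^{\varepsilon}\Pr[R(x')\in Y]$. $\mathbf U$ is the uniform distribution on $[d]$; for $H\subseteq[d]$, $\mathbf U_H$ is the uniform distribution on $H$; $R(\mathbf U)$, $R(\mathbf U_H)$ are the distributions of $R(\hat x)$ for $\hat x\sim\mathbf U$, resp. $\hat x\sim\mathbf U_H$. For $H\subset[d]$ with $|H|=d/2$, a message $y$ is $v$-leaky with respect to $H,R$ if $\left|\ln\frac{\Pr[R(\mathbf U_H)=y]}{\Pr[R(\mathbf U)=y]}\right|>v$ (messages with $\Pr[R(\mathbf U)=y]=0$ are regarded as not leaky), and $\mathit{Leak}(v,H,R)$ is the set of $y\in\mathcal Y$ that are $v$-leaky with respect to $H,R$. *)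

From Stdlib Require Import Reals Lra Lia List Classical ClassicalEpsilon.
Import ListNotations.
Open Scope R_scope.

(* Message set Y is modelled as nat (any countable set embeds into nat,
   unused messages get probability 0).  Inputs [d] = {0,...,d-1}.
   A randomizer R : [d] -> Y is given by its probability mass functions
   R x : nat -> R, for x < d. *)

Definition restrict (S : nat -> Prop) (p : nat -> R) (y : nat) : R :=
  if excluded_middle_informative (S y) then p y else 0.

(* Pr[p in S] = sum_{y in S} p y  (value of the series; 0 if it diverges,
   which never happens for probability distributions) *)
Definition Pr (p : nat -> R) (S : nat -> Prop) : R :=
  match excluded_middle_informative (exists l, infinite_sum (restrict S p) l) with
  | left h => proj1_sig (constructive_indefinite_description _ h)
  | right _ => 0
  end.

Definition is_randomizer (d : nat) (Rz : nat -> nat -> R) : Prop :=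
  forall x, (x < d)%nat -> (forall y, 0 <= Rz x y) /\ infinite_sum (Rz x) 1.

Definition eps_private (eps : R) (d : nat) (Rz : nat -> nat -> R) : Prop :=
  is_randomizer d Rz /\
  forall x x' (S : nat -> Prop), (x < d)%nat -> (x' < d)%nat ->
    Pr (Rz x) S <= exp eps * Pr (Rz x') S.

Definition sum_below (d : nat) (f : nat -> R) : R :=
  fold_right Rplus 0 (map f (seq 0 d)).

(* A subset H of [d] is a bit list of length d; x in H iff nth x H false = true *)
Definition inH (H : list bool) (x : nat) : bool := nth x H false.
Definition cardH (H : list bool) : nat := count_occ Bool.bool_dec H true.

Definition RU (d : nat) (Rz : nat -> nat -> R) (y : nat) : R :=
  / INR d * sum_below d (fun x => Rz x y).

Definition RUH (d : nat) (H : list bool) (Rz : nat -> nat -> R) (y : nat) : R :=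
  / INR (cardH H) * sum_below d (fun x => if inH H x then Rz x y else 0).

(* y is v-leaky w.r.t. H, R.  Messages with Pr[R(U)=y]=0 are not leaky;
   if Pr[R(U_H)=y]=0 < Pr[R(U)=y] then |ln(0)| = +infinity > v, so leaky. *)
Definition leaky (v : R) (d : nat) (H : list bool) (Rz : nat -> nat -> R) (y : nat) : Prop :=
  0 < RU d Rz y /\
  (RUH d H Rz y = 0 \/ Rabs (ln (RUH d H Rz y / RU d Rz y)) > v).

Definition Leak (v : R) (d : nat) (H : list bool) (Rz : nat -> nat -> R) : nat -> Prop :=
  fun y => leaky v d H Rz y.

Fixpoint all_subsets (d : nat) : list (list bool) :=
  match d with
  | O => [ [] ]
  | S d' => map (cons false) (all_subsets d') ++ map (cons true) (all_subsets d')
  end.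

Definition half_subsets (d : nat) : list (list bool) :=
  filter (fun H => Nat.eqb (cardH H) (Nat.div d 2)) (all_subsets d).

Definition prob_H (d : nat) (P : list bool -> Prop) : R :=
  INR (length (filter (fun H => if excluded_middle_informative (P H) then true else false)
                      (half_subsets d)))
  / INR (length (half_subsets d)).

(* For a fixed message y, privacy confines the values x |-> Pr[R(x) = y] to an interval
   [m, e^eps m], and Pr[R(U_H) = y] is the mean of these values over a uniformly random half H
   of [d].  A Hoeffding bound for sampling without replacement, proved through the moment
   generating function by induction along Pascal's rule, shows that y is v-leaky for at most a
   beta fraction of the sets H.  Summing over y gives E_H Pr[R_i(U) in Leak(v, H, R_i)] <= beta;
   Markov's inequality at level 6 beta n and a union bound over the n randomizers leave at most
   a 1/6 fraction of bad sets H. *)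

From Stdlib Require Import Reals List Lra Lia Psatz ClassicalEpsilon.
From Coquelicot Require Import Coquelicot.
Import ListNotations.
Open Scope R_scope.

Lemma exp_le x y : x <= y -> exp x <= exp y.
Proof. intros [Hlt | ->]; [left; apply exp_increasing |]; lra. Qed.

Lemma exp_le_quadratic z : z <= 1 -> exp z <= 1 + z + z ^ 2.
Proof.
  intros Hz. destruct (Rle_lt_dec z 0) as [Hneg | Hpos].
  - (* [exp z = / exp (- z) <= / (1 - z)], and [(1 + z + z ^ 2) (1 - z) = 1 - z ^ 3 >= 1] *)
    assert (H1 := exp_ineq1_le (- z)).
    rewrite <- (Rinv_inv (exp z)), <- exp_Ropp.
    apply Rle_trans with (/ (1 - z)); [apply Rinv_le_contravar; lra |].
    apply (Rmult_le_reg_r (1 - z)); [lra |].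
    rewrite Rinv_l by lra. nra.
  - (* [(1 + t + t ^ 2) exp (- t)] is nondecreasing on [0, 1] *)
    set (f t := (1 + t + t ^ 2) * exp (- t)).
    destruct (MVT_gen f 0 z (fun t => (t - t ^ 2) * exp (- t))) as [c [Hc Hf]].
    + intros t _. unfold f. auto_derive; [auto | ring].
    + intros t _. unfold f. reg.
    + rewrite Rmin_left, Rmax_right in Hc by lra.
      assert (Hc' : 0 <= (c - c ^ 2) * exp (- c)).
      { apply Rmult_le_pos; [nra | left; apply exp_pos]. }
      unfold f in Hf. rewrite Ropp_0, exp_0, exp_Ropp in Hf.
      assert (He := exp_pos z).
      apply (Rmult_le_reg_r (/ exp z)); [apply Rinv_0_lt_compat; lra |].
      rewrite Rinv_r by lra. nra.
Qed.

Lemma exp_opp_le v : 0 <= v <= 1 -> exp (- v) <= 1 - v / 2.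
Proof.
  intros Hv. assert (H1 := exp_ineq1_le v). assert (H2 := exp_pos v).
  rewrite exp_Ropp. apply (Rmult_le_reg_l (exp v)); [lra |].
  rewrite Rinv_r by lra. nra.
Qed.

(* Hoeffding's lemma for a Bernoulli variable, in the weak form given by [exp_le_quadratic]. *)
Lemma bernoulli_mgf_le p x : 0 <= p <= 1 -> Rabs x <= 1 ->
  1 - p + p * exp x <= exp (p * x + x ^ 2 / 4).
Proof.
  intros Hp Hx. apply Rabs_le_between in Hx.
  assert (H1 := exp_le_quadratic ((1 - p) * x) ltac:(nra)).
  assert (H2 := exp_le_quadratic (- (p * x)) ltac:(nra)).
  assert (H3 := exp_ineq1_le (x ^ 2 / 4)).
  assert (Hpx := exp_pos (p * x)).
  assert (E : 1 - p + p * exp x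
              = exp (p * x) * ((1 - p) * exp (- (p * x)) + p * exp ((1 - p) * x))).
  { assert (Ea : exp (p * x) * exp (- (p * x)) = 1).
    { rewrite <- exp_plus, Rplus_opp_r. apply exp_0. }
    assert (Eb : exp (p * x) * exp ((1 - p) * x) = exp x).
    { rewrite <- exp_plus. f_equal. ring. }
    rewrite <- Eb. replace (1 - p) with ((1 - p) * (exp (p * x) * exp (- (p * x)))) at 1
      by (rewrite Ea; ring).
    ring. }
  rewrite E, exp_plus. apply Rmult_le_compat_l; [lra |].
  assert (0 <= (p - 1 / 2) ^ 2 * x ^ 2) by (apply Rmult_le_pos; apply pow2_ge_0).
  nra.
Qed.

Definition lsum {A} (l : list A) (f : A -> R) : R := fold_right Rplus 0 (map f l).

Section ListSums.
Context {A : Type}.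
Implicit Types (l : list A) (f g : A -> R).

Lemma lsum_app l1 l2 f : lsum (l1 ++ l2) f = lsum l1 f + lsum l2 f.
Proof. induction l1 as [|x l1 IH]; unfold lsum in *; simpl; [ring | rewrite IH; ring]. Qed.

Lemma lsum_map {B} (l : list B) (h : B -> A) f : lsum (map h l) f = lsum l (fun x => f (h x)).
Proof. unfold lsum. now rewrite map_map. Qed.

Lemma lsum_ext l f g : (forall x, In x l -> f x = g x) -> lsum l f = lsum l g.
Proof.
  induction l as [|x l IH]; intros Hfg; unfold lsum in *; simpl; [reflexivity |].
  rewrite Hfg, IH by auto with datatypes. reflexivity.
Qed.

Lemma lsum_le l f g : (forall x, In x l -> f x <= g x) -> lsum l f <= lsum l g.
Proof.
  induction l as [|x l IH]; intros Hfg; unfold lsum in *; simpl; [lra |].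
  apply Rplus_le_compat; auto with datatypes.
Qed.

Lemma lsum_scal l c f : lsum l (fun x => c * f x) = c * lsum l f.
Proof. induction l as [|x l IH]; unfold lsum in *; simpl; [ring | rewrite IH; ring]. Qed.

Lemma lsum_const l c : lsum l (fun _ => c) = INR (length l) * c.
Proof.
  induction l as [|x l IH]; unfold lsum in *; [simpl; ring |].
  cbn [map fold_right length]. rewrite IH, S_INR. ring.
Qed.

Definition countP (P : A -> Prop) l : nat :=
  length (filter (fun x => if excluded_middle_informative (P x) then true else false) l).

Lemma countP_le_impl (P Q : A -> Prop) l :
  (forall x, In x l -> P x -> Q x) -> (countP P l <= countP Q l)%nat.
Proof.
  unfold countP. induction l as [|x l IH]; intros HPQ; simpl; [lia |].
  specialize (IH (fun y Hy => HPQ y (or_intror Hy))).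
  destruct (excluded_middle_informative (P x)), (excluded_middle_informative (Q x));
    simpl; try lia.
  exfalso. auto with datatypes.
Qed.

Lemma countP_or_le (P Q : A -> Prop) l :
  (countP (fun x => P x \/ Q x) l <= countP P l + countP Q l)%nat.
Proof.
  unfold countP. induction l as [|x l IH]; simpl; [lia |].
  destruct (excluded_middle_informative (P x \/ Q x));
  destruct (excluded_middle_informative (P x)), (excluded_middle_informative (Q x));
    simpl; tauto || lia.
Qed.

Lemma countP_none (P : A -> Prop) l : (forall x, In x l -> ~ P x) -> countP P l = 0%nat.
Proof.
  unfold countP. induction l as [|x l IH]; intros HP; simpl; [reflexivity |].
  destruct (excluded_middle_informative (P x)) as [HPx | _].
  - exfalso. exact (HP x (or_introl eq_refl) HPx).
  - apply IH. auto with datatypes.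
Qed.

Lemma countP_add_not (P : A -> Prop) l : (countP P l + countP (fun x => ~ P x) l)%nat = length l.
Proof.
  unfold countP. induction l as [|x l IH]; simpl; [reflexivity |].
  destruct (excluded_middle_informative (P x)), (excluded_middle_informative (~ P x));
    simpl; tauto || lia.
Qed.

Lemma lsum_indicator (P : A -> Prop) l c :
  lsum l (fun x => if excluded_middle_informative (P x) then c else 0) = c * INR (countP P l).
Proof.
  unfold countP. induction l as [|x l IH]; unfold lsum in *; simpl; [ring |].
  destruct (excluded_middle_informative (P x)); simpl length; rewrite IH;
    [rewrite S_INR |]; ring.
Qed.

Lemma markov_countP l f M : 0 <= M -> (forall x, In x l -> 0 <= f x) ->
  INR (countP (fun x => M <= f x) l) * M <= lsum l f.
Proof.
  intros HM Hf. rewrite Rmult_comm, <- lsum_indicator. apply lsum_le.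
  intros x Hx. destruct (excluded_middle_informative (M <= f x)); auto.
Qed.

Lemma countP_exists_le (Q : nat -> A -> Prop) l n c :
  (forall i, (i < n)%nat -> INR (countP (Q i) l) <= c) ->
  INR (countP (fun x => exists i, (i < n)%nat /\ Q i x) l) <= INR n * c.
Proof.
  induction n as [|n IH]; intros HQ.
  - rewrite countP_none; [simpl; lra |]. intros x _ [i [Hi _]]. lia.
  - apply Rle_trans with (INR (countP (fun x => Q n x \/ exists i, (i < n)%nat /\ Q i x) l)).
    { apply le_INR, countP_le_impl. intros x _ [i [Hi HQi]].
      destruct (Nat.eq_dec i n) as [-> | Hne]; [left | right; exists i; split]; auto; lia. }
    eapply Rle_trans; [apply le_INR, countP_or_le |].
    rewrite plus_INR, S_INR.
    assert (IHn := IH (fun i Hi => HQ i (Nat.lt_lt_succ_r _ _ Hi))).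
    assert (HQn := HQ n (Nat.lt_succ_diag_r n)). lra.
Qed.

End ListSums.

(** * Subsets of fixed size *)

Definition ksubsets (N k : nat) : list (list bool) :=
  filter (fun H => Nat.eqb (cardH H) k) (all_subsets N).

Lemma ksubsets_0_0 : ksubsets 0 0 = [[]].
Proof. reflexivity. Qed.

Lemma ksubsets_0_S k : ksubsets 0 (S k) = [].
Proof. reflexivity. Qed.

Lemma ksubsets_S N k : ksubsets (S N) k =
  map (cons false) (ksubsets N k) ++
  match k with O => [] | S k' => map (cons true) (ksubsets N k') end.
Proof.
  unfold ksubsets. simpl. rewrite filter_app.
  assert (filter_map : forall b (p : list bool -> bool) l,
            filter p (map (cons b) l) = map (cons b) (filter (fun H => p (b :: H)) l)).
  { intros b p l. induction l as [|H l IH]; simpl; [reflexivity |].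
    destruct (p (b :: H)); simpl; rewrite IH; reflexivity. }
  rewrite !filter_map. f_equal. destruct k as [|k].
  - induction (all_subsets N); simpl; auto.
  - reflexivity.
Qed.

Lemma length_ksubsets_S_S N k :
  length (ksubsets (S N) (S k)) = (length (ksubsets N (S k)) + length (ksubsets N k))%nat.
Proof. now rewrite ksubsets_S, length_app, !length_map. Qed.

Lemma length_ksubsets_0 N : length (ksubsets N 0) = 1%nat.
Proof.
  induction N as [|N IH]; [reflexivity |].
  now rewrite ksubsets_S, app_nil_r, length_map.
Qed.

Lemma length_ksubsets_pos N k : (k <= N)%nat -> (0 < length (ksubsets N k))%nat.
Proof.
  revert k. induction N as [|N IH]; intros [|k] Hk; try lia;
    rewrite ?length_ksubsets_0; try lia.
  rewrite length_ksubsets_S_S. specialize (IH k ltac:(lia)). lia.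
Qed.

Lemma ksubsets_absorption N k :
  (S k * length (ksubsets (S N) (S k)) = S N * length (ksubsets N k))%nat.
Proof.
  revert k. induction N as [|N IH]; intros k; rewrite length_ksubsets_S_S.
  - destruct k; simpl; lia.
  - destruct k as [|k].
    + rewrite !length_ksubsets_0. specialize (IH 0%nat). rewrite length_ksubsets_0 in IH. lia.
    + pose proof (IH (S k)) as H1. pose proof (IH k) as H2.
      rewrite (length_ksubsets_S_S N k) in *. nia.
Qed.

Lemma in_ksubsets N k H : In H (ksubsets N k) -> cardH H = k /\ length H = N.
Proof.
  unfold ksubsets. rewrite filter_In. intros [HN Hk]. split; [now apply Nat.eqb_eq |].
  clear Hk. revert H HN. induction N as [|N IH]; intros H HN; simpl in HN.
  - now destruct HN as [<- | []].
  - apply in_app_or in HN.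
    destruct HN as [HN | HN]; apply in_map_iff in HN; destruct HN as [H' [<- HN]];
      simpl; f_equal; auto.
Qed.

(** * Concentration of the sum over a random subset *)

Lemma sum_below_S N f : sum_below (S N) f = f 0%nat + sum_below N (fun x => f (S x)).
Proof. unfold sum_below. simpl. now rewrite <- seq_shift, map_map. Qed.

Lemma sum_below_le N f g : (forall x, (x < N)%nat -> f x <= g x) ->
  sum_below N f <= sum_below N g.
Proof.
  intros Hfg. apply (lsum_le (seq 0 N)). intros x Hx. apply in_seq in Hx. apply Hfg. lia.
Qed.

Lemma sum_below_const N c : sum_below N (fun _ => c) = INR N * c.
Proof. rewrite <- (length_seq N 0) at 2. apply (lsum_const (seq 0 N)). Qed.

Definition sumH (N : nat) (H : list bool) (a : nat -> R) : R :=
  sum_below N (fun x => if inH H x then a x else 0).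

Definition mean (N : nat) (a : nat -> R) : R := / INR N * sum_below N a.

Lemma sumH_cons N b H a :
  sumH (S N) (b :: H) a = (if b then a 0%nat else 0) + sumH N H (fun x => a (S x)).
Proof. unfold sumH. now rewrite sum_below_S. Qed.

Lemma sumH_const H c : sumH (length H) H (fun _ => c) = INR (cardH H) * c.
Proof.
  induction H as [|b H IH]; [unfold sumH, sum_below; simpl; ring |].
  simpl length. rewrite sumH_cons, IH. destruct b.
  - change (cardH (true :: H)) with (S (cardH H)). rewrite S_INR. ring.
  - change (cardH (false :: H)) with (cardH H). ring.
Qed.

Lemma sumH_bounds N k H a lo hi : In H (ksubsets N k) ->
  (forall x, (x < N)%nat -> lo <= a x <= hi) ->
  INR k * lo <= sumH N H a <= INR k * hi.
Proof.
  intros HH Ha. destruct (in_ksubsets _ _ _ HH) as [<- <-].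
  rewrite <- !sumH_const. split; apply sum_below_le; intros x Hx;
    destruct (inH H x); try lra; apply Ha; auto.
Qed.

Lemma INR_mul_mean N a : INR N * mean N a = sum_below N a.
Proof.
  unfold mean. destruct N as [|N]; [unfold sum_below; simpl; ring |].
  field. apply not_0_INR. lia.
Qed.

Lemma mean_bounds N a lo hi : (0 < N)%nat -> (forall x, (x < N)%nat -> lo <= a x <= hi) ->
  lo <= mean N a <= hi.
Proof.
  intros HN Ha. assert (HN' : 0 < INR N) by (apply lt_0_INR; lia).
  assert (Hlo := sum_below_le N (fun _ => lo) a (fun x Hx => proj1 (Ha x Hx))).
  assert (Hhi := sum_below_le N a (fun _ => hi) (fun x Hx => proj2 (Ha x Hx))).
  rewrite sum_below_const, <- INR_mul_mean in Hlo, Hhi. nra.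
Qed.

Lemma mgf_step c1 c2 p x Q S1 S2 : 0 <= c1 -> 0 <= c2 -> (c1 + c2) * p = c1 ->
  Rabs x <= 1 -> S1 <= c2 * exp Q -> S2 <= c1 * exp Q ->
  exp (- (p * x)) * (S1 + exp x * S2) <= (c1 + c2) * exp (x ^ 2 / 4 + Q).
Proof.
  intros Hc1 Hc2 Hp Hx HS1 HS2.
  assert (Hpx := exp_pos (- (p * x))). assert (Hex := exp_pos x).
  assert (HeQ := exp_pos Q).
  apply Rle_trans with (exp (- (p * x)) * ((c2 + exp x * c1) * exp Q)).
  { apply Rmult_le_compat_l; nra. }
  destruct (Req_dec (c1 + c2) 0) as [Hc0 | Hc0].
  { replace c1 with 0 by lra. replace c2 with 0 by lra. lra. }
  assert (Hbern := bernoulli_mgf_le p x ltac:(split; nra) Hx).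
  assert (E : c2 + exp x * c1 = (c1 + c2) * (1 - p + p * exp x)) by nra.
  assert (K : exp (- (p * x)) * exp (p * x + x ^ 2 / 4) = exp (x ^ 2 / 4)).
  { rewrite <- exp_plus. f_equal. ring. }
  assert (Hpos : 0 <= exp (- (p * x)) * (c1 + c2) * exp Q) by (apply Rmult_le_pos; nra).
  assert (Hm := Rmult_le_compat_l _ _ _ Hpos Hbern).
  rewrite E, exp_plus. nra.
Qed.

Lemma mean_S N a : mean (S N) a = (a 0%nat + INR N * mean N (fun x => a (S x))) / INR (S N).
Proof.
  assert (HSN : INR (S N) <> 0) by (apply not_0_INR; lia).
  apply (Rmult_eq_reg_l (INR (S N))); [| exact HSN].
  rewrite INR_mul_mean, sum_below_S, INR_mul_mean. field. exact HSN.
Qed.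

Lemma lsum_ksubsets_S_S N k (F : list bool -> R) :
  lsum (ksubsets (S N) (S k)) F
  = lsum (ksubsets N (S k)) (fun H => F (false :: H))
    + lsum (ksubsets N k) (fun H => F (true :: H)).
Proof. now rewrite ksubsets_S, lsum_app, !lsum_map. Qed.

(* Splitting on whether [0 \in H] and recentring both halves at the mean [mu'] of the
   remaining values leaves the Bernoulli average [1 - p + p exp x], with
   [p = (k + 1) / (N + 1)] and [x = lam (a 0 - mu')], for [bernoulli_mgf_le]. *)
Lemma mgf_ksubsets_S_S N k a lo W lam Q : (0 < N)%nat ->
  (forall x, (x < S N)%nat -> lo <= a x <= lo + W) -> Rabs lam * W <= 1 ->
  (forall j, lsum (ksubsets N j)
               (fun H => exp (lam * (sumH N H (fun x => a (S x))
                                     - INR j * mean N (fun x => a (S x)))))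
             <= INR (length (ksubsets N j)) * exp Q) ->
  lsum (ksubsets (S N) (S k)) (fun H => exp (lam * (sumH (S N) H a - INR (S k) * mean (S N) a)))
  <= INR (length (ksubsets (S N) (S k))) * exp ((lam * W) ^ 2 / 4 + Q).
Proof.
  intros HN Ha Hlam IH.
  set (a' x := a (S x)) in IH. set (mu' := mean N a') in IH.
  assert (Hmu' : lo <= mu' <= lo + W)
    by (apply mean_bounds; [exact HN | intros x Hx; apply Ha; lia]).
  assert (HN1 : INR N + 1 <> 0) by (rewrite <- S_INR; apply not_0_INR; lia).
  set (p := INR (S k) / INR (S N)). set (x := lam * (a 0%nat - mu')).
  rewrite lsum_ksubsets_S_S, mean_S. fold a' mu'.
  rewrite (lsum_ext (ksubsets N (S k)) _
             (fun H => exp (- (p * x)) * exp (lam * (sumH N H a' - INR (S k) * mu')))).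
  2: { intros H _. rewrite sumH_cons, <- exp_plus. f_equal. unfold p, x, a'.
       rewrite (S_INR N). field. exact HN1. }
  rewrite (lsum_ext (ksubsets N k) _
             (fun H => exp (- (p * x)) * (exp x * exp (lam * (sumH N H a' - INR k * mu'))))).
  2: { intros H _. rewrite sumH_cons, <- !exp_plus. f_equal. unfold p, x, a'.
       rewrite (S_INR N), (S_INR k). field. exact HN1. }
  rewrite !lsum_scal, <- Rmult_plus_distr_l, length_ksubsets_S_S, plus_INR,
    (Rplus_comm (INR (length (ksubsets N (S k))))).
  assert (Hp : (INR (length (ksubsets N k)) + INR (length (ksubsets N (S k)))) * p
               = INR (length (ksubsets N k))).
  { unfold p. rewrite <- plus_INR, Nat.add_comm, <- length_ksubsets_S_S.
    field_simplify_eq; [| rewrite S_INR; exact HN1].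
    rewrite <- !mult_INR, Nat.mul_comm, ksubsets_absorption. reflexivity. }
  assert (Hdev : Rabs (a 0%nat - mu') <= W).
  { apply Rabs_le_between. specialize (Ha 0%nat ltac:(lia)). lra. }
  assert (Hx : Rabs x <= Rabs lam * W).
  { unfold x. rewrite Rabs_mult. apply Rmult_le_compat_l; [apply Rabs_pos | exact Hdev]. }
  apply Rle_trans with ((INR (length (ksubsets N k)) + INR (length (ksubsets N (S k))))
                        * exp (x ^ 2 / 4 + Q)).
  - apply mgf_step; auto using pos_INR. lra.
  - apply Rmult_le_compat_l; [generalize (pos_INR (length (ksubsets N k)))
                                         (pos_INR (length (ksubsets N (S k)))); lra |].
    apply exp_le, Rplus_le_compat_r, Rmult_le_compat_r; [lra |].
    assert (Hw : 0 <= W) by (generalize (Rabs_pos (a 0%nat - mu')); lra).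
    rewrite <- (pow2_abs x), <- (pow2_abs (lam * W)), Rabs_mult, (Rabs_pos_eq W Hw).
    apply pow_incr. split; [apply Rabs_pos | exact Hx].
Qed.

Lemma mgf_ksubsets N : forall a k lo W lam, 0 <= W ->
  (forall x, (x < N)%nat -> lo <= a x <= lo + W) -> Rabs lam * W <= 1 ->
  lsum (ksubsets N k) (fun H => exp (lam * (sumH N H a - INR k * mean N a)))
  <= INR (length (ksubsets N k)) * exp (lam ^ 2 * INR N * W ^ 2 / 4).
Proof.
  induction N as [|N IH]; intros a k lo W lam HW Ha Hlam.
  { destruct k as [|k]; [rewrite ksubsets_0_0 | rewrite ksubsets_0_S]; unfold lsum; simpl.
    - unfold sumH, sum_below; simpl.
      replace (lam * (0 - 0 * mean 0 a)) with 0 by ring.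
      replace (lam * (lam * 1) * 0 * (W * (W * 1)) / 4) with 0 by (unfold Rdiv; ring). lra.
    - lra. }
  assert (Ha' : forall x, (x < N)%nat -> lo <= a (S x) <= lo + W) by (intros x Hx; apply Ha; lia).
  assert (HQ : lam ^ 2 * INR (S N) * W ^ 2 / 4 = (lam * W) ^ 2 / 4 + lam ^ 2 * INR N * W ^ 2 / 4)
    by (rewrite S_INR; field).
  destruct k as [|k].
  - rewrite ksubsets_S, app_nil_r, lsum_map, length_map.
    rewrite (lsum_ext _ _ (fun H => exp (lam * (sumH N H (fun x => a (S x))
                                           - INR 0 * mean N (fun x => a (S x)))))).
    2: { intros H _. rewrite sumH_cons. simpl INR. rewrite !Rmult_0_l, Rplus_0_l. reflexivity. }
    eapply Rle_trans; [apply (IH _ 0%nat lo W lam HW Ha' Hlam) |].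
    apply Rmult_le_compat_l; [apply pos_INR |]. apply exp_le. rewrite HQ.
    assert (0 <= (lam * W) ^ 2) by apply pow2_ge_0. lra.
  - destruct (Nat.eq_dec N 0) as [-> | HN].
    + (* [mgf_ksubsets_S_S] needs [0 < N]; here the only subset is [{0}],
         on which the exponent vanishes *)
      assert (H1 : 1 <= exp (lam ^ 2 * 1 * W ^ 2 / 4)).
      { assert (0 <= lam ^ 2 * W ^ 2) by (apply Rmult_le_pos; apply pow2_ge_0).
        generalize (exp_ineq1_le (lam ^ 2 * 1 * W ^ 2 / 4)). lra. }
      rewrite ksubsets_S, ksubsets_0_S. destruct k as [|k].
      * rewrite ksubsets_0_0. unfold lsum. cbn [map fold_right length app].
        replace (sumH 1 [true] a) with (sum_below 1 a) by reflexivity.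
        rewrite INR_mul_mean, Rminus_diag, Rmult_0_r, exp_0, INR_1. lra.
      * rewrite ksubsets_0_S. unfold lsum. cbn [map fold_right length app]. rewrite INR_0. lra.
    + rewrite HQ. apply mgf_ksubsets_S_S with lo; [lia | exact Ha | exact Hlam |].
      intros j. exact (IH _ j lo W lam HW Ha' Hlam).
Qed.

Lemma chernoff_ksubsets N k a lo W lam T : 0 <= W ->
  (forall x, (x < N)%nat -> lo <= a x <= lo + W) -> Rabs lam * W <= 1 ->
  INR (countP (fun H => T <= lam * (sumH N H a - INR k * mean N a)) (ksubsets N k))
  <= INR (length (ksubsets N k)) * exp (lam ^ 2 * INR N * W ^ 2 / 4 - T).
Proof.
  intros HW Ha Hlam.
  set (f H := exp (lam * (sumH N H a - INR k * mean N a))).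
  assert (Hmarkov := markov_countP (ksubsets N k) f (exp T) (Rlt_le _ _ (exp_pos T))
                       (fun H _ => Rlt_le _ _ (exp_pos _))).
  assert (Hmono : le (countP (fun H => T <= lam * (sumH N H a - INR k * mean N a)) (ksubsets N k))
                     (countP (fun H => exp T <= f H) (ksubsets N k))).
  { apply countP_le_impl. intros H _ HT. apply exp_le, HT. }
  apply le_INR in Hmono.
  assert (Hmgf : lsum (ksubsets N k) f
                 <= INR (length (ksubsets N k)) * exp (lam ^ 2 * INR N * W ^ 2 / 4))
    by exact (mgf_ksubsets N a k lo W lam HW Ha Hlam).
  assert (E : exp (lam ^ 2 * INR N * W ^ 2 / 4 - T) * exp T = exp (lam ^ 2 * INR N * W ^ 2 / 4)).
  { rewrite <- exp_plus. f_equal. ring. }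
  assert (HT := exp_pos T).
  apply (Rmult_le_reg_r (exp T)); [exact HT |].
  rewrite Rmult_assoc, E. nra.
Qed.

Lemma deviation_ksubsets N k a lo W t : 0 < W -> 0 <= t <= W ->
  (forall x, (x < N)%nat -> lo <= a x <= lo + W) ->
  INR (countP (fun H => INR k * t <= Rabs (sumH N H a - INR k * mean N a)) (ksubsets N k))
  <= 2 * INR (length (ksubsets N k)) * exp ((INR N / 4 - INR k) * (t / W) ^ 2).
Proof.
  intros HW Ht Ha.
  set (lam := t / W ^ 2).
  assert (Hlam0 : 0 <= lam)
    by (unfold lam; apply Rmult_le_pos; [lra | left; apply Rinv_0_lt_compat; nra]).
  assert (HlamW : lam * W <= 1).
  { unfold lam. apply (Rmult_le_reg_r W); [exact HW |]. field_simplify; [nra | lra]. }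
  assert (Hexp : (INR N / 4 - INR k) * (t / W) ^ 2 = lam ^ 2 * INR N * W ^ 2 / 4 - INR k * t * lam).
  { unfold lam. field. lra. }
  rewrite Hexp.
  eapply Rle_trans; [apply le_INR, (countP_le_impl _ (fun H =>
    INR k * t * lam <= lam * (sumH N H a - INR k * mean N a) \/
    INR k * t * lam <= - lam * (sumH N H a - INR k * mean N a))) |].
  { intros H _ Hdev. unfold Rabs in Hdev. destruct Rcase_abs; [right | left]; nra. }
  eapply Rle_trans; [apply le_INR, countP_or_le |]. rewrite plus_INR.
  assert (Hup := chernoff_ksubsets N k a lo W lam (INR k * t * lam) (Rlt_le _ _ HW) Ha
                   ltac:(rewrite Rabs_pos_eq; lra)).
  assert (Hdn := chernoff_ksubsets N k a lo W (- lam) (INR k * t * lam) (Rlt_le _ _ HW) Ha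
                   ltac:(rewrite Rabs_Ropp, Rabs_pos_eq; lra)).
  replace ((- lam) ^ 2) with (lam ^ 2) in Hdn by ring. lra.
Qed.

(** * Leaky messages *)

Lemma ratio_deviation mu r v : 0 < mu -> 0 <= r -> 0 <= v <= 1 ->
  (r = 0 \/ Rabs (ln (r / mu)) > v) -> v * mu / 2 <= Rabs (r - mu).
Proof.
  intros Hmu Hr Hv Hleak.
  destruct (Req_dec r 0) as [-> | Hr0].
  { rewrite Rminus_0_l, Rabs_Ropp, Rabs_pos_eq by lra. nra. }
  destruct Hleak as [Hr0' | Hln]; [contradiction |].
  assert (Hq : 0 < r / mu) by (apply Rdiv_lt_0_compat; lra).
  assert (Hr_mu : r = mu * (r / mu)) by (field; lra).
  destruct (Rle_lt_dec 0 (ln (r / mu))) as [Hpos | Hneg].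
  - rewrite Rabs_pos_eq in Hln by exact Hpos.
    assert (Hexp : exp v < r / mu).
    { rewrite <- (exp_ln (r / mu)) by exact Hq. apply exp_increasing. lra. }
    assert (H1 := exp_ineq1_le v).
    rewrite Rabs_pos_eq; nra.
  - rewrite Rabs_left in Hln by exact Hneg.
    assert (Hexp : r / mu < exp (- v)).
    { rewrite <- (exp_ln (r / mu)) by exact Hq. apply exp_increasing. lra. }
    assert (H1 := exp_opp_le v Hv).
    rewrite Rabs_minus_sym, Rabs_pos_eq; nra.
Qed.

Lemma leaky_deviation v d k H Rz y : In H (ksubsets d k) -> (0 < k)%nat -> 0 <= v <= 1 ->
  (forall x, (x < d)%nat -> 0 <= Rz x y) -> leaky v d H Rz y ->
  INR k * (v * RU d Rz y / 2)
  <= Rabs (sumH d H (fun x => Rz x y) - INR k * mean d (fun x => Rz x y)).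
Proof.
  intros HH Hk Hv HRz [Hmu Hleak].
  destruct (in_ksubsets _ _ _ HH) as [Hcard _].
  assert (HkR : 0 < INR k) by (apply lt_0_INR; exact Hk).
  assert (Hs0 : 0 <= sumH d H (fun x => Rz x y)).
  { rewrite <- (Rmult_0_r (INR d)), <- sum_below_const. apply sum_below_le.
    intros x Hx. destruct (inH H x); [apply HRz, Hx | lra]. }
  assert (Hsum : sumH d H (fun x => Rz x y) = INR k * RUH d H Rz y).
  { change (RUH d H Rz y) with (/ INR (cardH H) * sumH d H (fun x => Rz x y)).
    rewrite Hcard. field. lra. }
  assert (Hr : 0 <= RUH d H Rz y) by nra.
  change (mean d (fun x => Rz x y)) with (RU d Rz y).
  rewrite Hsum, <- Rmult_minus_distr_l, Rabs_mult, Rabs_pos_eq by lra.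
  apply Rmult_le_compat_l; [lra |]. now apply ratio_deviation.
Qed.

Lemma exists_argmin (N : nat) (a : nat -> R) : (0 < N)%nat ->
  exists x0, (x0 < N)%nat /\ forall x, (x < N)%nat -> a x0 <= a x.
Proof.
  induction N as [|N IH]; intros HN; [lia |].
  destruct (Nat.eq_dec N 0) as [-> | HN0].
  { exists 0%nat. split; [lia |]. intros x Hx. replace x with 0%nat by lia. lra. }
  destruct (IH ltac:(lia)) as [x0 [Hx0 Hmin]].
  destruct (Rle_lt_dec (a x0) (a N)) as [Hle | Hlt].
  - exists x0. split; [lia |]. intros x Hx.
    destruct (Nat.eq_dec x N) as [-> | Hne]; [exact Hle | apply Hmin; lia].
  - exists N. split; [lia |]. intros x Hx.
    destruct (Nat.eq_dec x N) as [-> | Hne]; [lra |]. specialize (Hmin x ltac:(lia)). lra.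
Qed.

(* The dimension bound makes the two-sided tail of [deviation_ksubsets], taken at
   [t = v mu / 2] with range width [W = (e^eps - 1) m], at most [beta]. *)
Lemma deviation_exponent_le eps beta v k m mu : 0 < beta -> 1 < exp eps -> 0 < m <= mu ->
  0 <= v -> 16 * (exp eps - 1) ^ 2 * ln (2 / beta) <= INR (2 * k) * v ^ 2 ->
  2 * exp ((INR (2 * k) / 4 - INR k) * (v * mu / 2 / ((exp eps - 1) * m)) ^ 2) <= beta.
Proof.
  intros Hbeta He Hm Hv Hdv.
  set (L := ln (2 / beta)) in *. set (q := v * mu / 2 / ((exp eps - 1) * m)).
  rewrite mult_INR in *. change (INR 2) with 2 in *.
  assert (Hq : v <= 2 * (exp eps - 1) * q).
  { replace (2 * (exp eps - 1) * q) with (v + v * (mu - m) / m) by (unfold q; field; lra).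
    assert (0 <= v * (mu - m) / m)
      by (apply Rmult_le_pos; [nra | left; apply Rinv_0_lt_compat; lra]).
    lra. }
  assert (HL : 2 * L <= INR k * q ^ 2).
  { assert (Hq2 : v ^ 2 <= 4 * (exp eps - 1) ^ 2 * q ^ 2) by nra.
    assert (He2 : 0 < (exp eps - 1) ^ 2) by (apply pow_lt; lra).
    assert (HkR := pos_INR k). nra. }
  replace beta with (2 * exp (- L)).
  - apply Rmult_le_compat_l, exp_le; lra.
  - unfold L. rewrite exp_Ropp, exp_ln by (apply Rdiv_lt_0_compat; lra). field. lra.
Qed.

Lemma count_leaky_le eps beta v k Rz y : 0 < eps -> 0 < beta -> (0 < k)%nat -> 0 <= v <= 1 ->
  16 * (exp eps - 1) ^ 2 * ln (2 / beta) <= INR (2 * k) * v ^ 2 ->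
  (forall x, (x < 2 * k)%nat -> 0 <= Rz x y) ->
  (forall x x', (x < 2 * k)%nat -> (x' < 2 * k)%nat -> Rz x y <= exp eps * Rz x' y) ->
  INR (countP (fun H => leaky v (2 * k) H Rz y) (ksubsets (2 * k) k))
  <= beta * INR (length (ksubsets (2 * k) k)).
Proof.
  intros Heps Hbeta Hk Hv Hdv HRz Hpriv.
  set (d := (2 * k)%nat) in *. set (a x := Rz x y). set (mu := RU d Rz y).
  assert (HC := pos_INR (length (ksubsets d k))).
  assert (HkR : 0 < INR k) by (apply lt_0_INR; exact Hk).
  destruct (Rle_lt_dec mu 0) as [Hmu0 | Hmu0].
  { rewrite countP_none; [simpl; nra |]. intros H _ [Hpos _]. fold mu in Hpos. lra. }
  destruct (exists_argmin d a ltac:(unfold d; lia)) as [x0 [Hx0 Hmin]].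
  set (m := a x0). set (W := (exp eps - 1) * m).
  assert (He : 1 < exp eps) by (rewrite <- exp_0; apply exp_increasing; exact Heps).
  assert (Hrange : forall x, (x < d)%nat -> m <= a x <= m + W).
  { intros x Hx. split; [apply Hmin, Hx |].
    replace (m + W) with (exp eps * m) by (unfold W; ring). apply Hpriv; assumption. }
  assert (Hmu := mean_bounds d a m (m + W) ltac:(unfold d; lia) Hrange).
  change (mean d a) with mu in Hmu.
  assert (Hm : 0 < m) by (unfold W in Hmu; nra).
  assert (HW : 0 < W) by (unfold W; nra).
  set (t := v * mu / 2).
  assert (Ht0 : 0 <= t) by (unfold t; nra).
  assert (Hdev : forall H, In H (ksubsets d k) -> leaky v d H Rz y ->
                   INR k * t <= Rabs (sumH d H a - INR k * mean d a))
    by (intros H HH Hl; exact (leaky_deviation v d k H Rz y HH Hk Hv HRz Hl)).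
  destruct (Rle_lt_dec t W) as [HtW | HtW].
  2: { (* a leaky [H] would deviate by more than the width [W] of the range *)
       rewrite countP_none; [simpl; nra |]. intros H HH Hl.
       assert (Hs := sumH_bounds d k H a m (m + W) HH Hrange).
       assert (Hdev' := Hdev H HH Hl). change (mean d a) with mu in Hdev'.
       assert (Rabs (sumH d H a - INR k * mu) <= INR k * W) by (apply Rabs_le_between; nra).
       nra. }
  eapply Rle_trans; [apply le_INR, (countP_le_impl _ _ _ Hdev) |].
  eapply Rle_trans; [apply (deviation_ksubsets d k a m W t HW (conj Ht0 HtW) Hrange) |].
  assert (Hexp := deviation_exponent_le eps beta v k m mu Hbeta He (conj Hm (proj1 Hmu))
                    (proj1 Hv) Hdv).
  fold d t W in Hexp. nra.
Qed.

(** * Probabilities of sets of messages *)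

Lemma is_series_single (f : nat -> R) y : (forall z, z <> y -> f z = 0) -> is_series f (f y).
Proof.
  intros Hf. apply is_series_Reals.
  assert (Hpartial : forall n, (y <= n)%nat -> sum_f_R0 f n = f y).
  { induction n as [|n IH]; intros Hn.
    - now replace y with 0%nat by lia.
    - simpl. destruct (Nat.eq_dec y (S n)) as [-> | Hne].
      + rewrite sum_eq_R0; [ring |]. intros z Hz. apply Hf. lia.
      + rewrite IH, (Hf (S n)) by lia. ring. }
  intros e He. exists y. intros n Hn. unfold R_dist.
  rewrite Hpartial, Rminus_diag, Rabs_R0 by lia. exact He.
Qed.

Lemma is_series_lsum {A} (l : list A) (F : A -> nat -> R) (P : A -> R) :
  (forall x, In x l -> is_series (F x) (P x)) ->
  is_series (fun y => lsum l (fun x => F x y)) (lsum l P).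
Proof.
  induction l as [|x l IH]; intros HF.
  - exact (is_series_single (fun _ => 0) 0%nat (fun _ _ => eq_refl)).
  - apply (is_series_plus (F x) (fun y => lsum l (fun x => F x y))); auto with datatypes.
Qed.

Lemma Pr_is_series p S l : is_series (restrict S p) l -> Pr p S = l.
Proof.
  intros Hl. apply is_series_Reals in Hl. unfold Pr.
  destruct (excluded_middle_informative _) as [Hex | Hnex].
  - destruct (constructive_indefinite_description _ Hex) as [l' Hl']. simpl.
    exact (uniqueness_sum _ _ _ Hl' Hl).
  - exfalso. apply Hnex. exists l. exact Hl.
Qed.

Lemma Pr_spec p S : (forall y, 0 <= p y) -> ex_series p -> is_series (restrict S p) (Pr p S).
Proof.
  intros Hp Hex.
  assert (Hrex : ex_series (restrict S p)).
  { apply (@ex_series_le R_AbsRing R_CompleteNormedModule _ p); [| exact Hex].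
    intros y. change (norm (restrict S p y)) with (Rabs (restrict S p y)). unfold restrict.
    destruct (excluded_middle_informative (S y));
      [rewrite Rabs_pos_eq by apply Hp | rewrite Rabs_R0]; auto; lra. }
  rewrite (Pr_is_series p S (Series (restrict S p))); apply Series_correct, Hrex.
Qed.

Lemma Pr_singleton p y : Pr p (fun z => z = y) = p y.
Proof.
  apply Pr_is_series.
  replace (p y) with (restrict (fun z => z = y) p y)
    by (unfold restrict; destruct (excluded_middle_informative (y = y)); tauto).
  apply is_series_single. intros z Hz. unfold restrict.
  destruct (excluded_middle_informative (z = y)); tauto.
Qed.

Lemma eps_private_pointwise eps d Rz : eps_private eps d Rz ->
  forall x x' y, (x < d)%nat -> (x' < d)%nat -> Rz x y <= exp eps * Rz x' y.
Proof.
  intros [_ Hpriv] x x' y Hx Hx'. rewrite <- !Pr_singleton. now apply Hpriv.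
Qed.

Lemma RU_distribution d Rz : is_randomizer d Rz -> (0 < d)%nat ->
  (forall y, 0 <= RU d Rz y) /\ is_series (RU d Rz) 1.
Proof.
  intros HR Hd. assert (HdR : 0 < INR d) by (apply lt_0_INR; exact Hd). split.
  - intros y. apply Rmult_le_pos; [left; apply Rinv_0_lt_compat, HdR |].
    rewrite <- (Rmult_0_r (INR d)), <- sum_below_const. apply sum_below_le.
    intros x Hx. apply HR, Hx.
  - replace 1 with (/ INR d * lsum (seq 0 d) (fun _ => 1)).
    2: { rewrite lsum_const, length_seq. field. lra. }
    apply (is_series_scal_l (/ INR d) (fun y => lsum (seq 0 d) (fun x => Rz x y))).
    apply is_series_lsum. intros x Hx. apply in_seq in Hx. apply is_series_Reals, HR. lia.
Qed.

Lemma lsum_Pr_le {A} (l : list A) (S : A -> nat -> Prop) (p : nat -> R) (c : R) :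
  (forall y, 0 <= p y) -> is_series p 1 ->
  (forall y, 0 < p y -> INR (countP (fun x => S x y) l) <= c) ->
  lsum l (fun x => Pr p (S x)) <= c.
Proof.
  intros Hp Hp1 Hc.
  assert (Hsum := is_series_lsum l (fun x => restrict (S x) p) (fun x => Pr p (S x))
                    (fun x _ => Pr_spec p (S x) Hp (ex_intro _ 1 Hp1))).
  assert (Hcp : is_series (fun y => c * p y) (c * 1)) by exact (is_series_scal_l c p 1 Hp1).
  rewrite Rmult_1_r in Hcp.
  rewrite <- (is_series_unique _ _ Hsum), <- (is_series_unique _ _ Hcp).
  apply Series_le; [| exists c; exact Hcp].
  intros y. replace (lsum l (fun x => restrict (S x) p y))
    with (p y * INR (countP (fun x => S x y) l)) by (symmetry; apply lsum_indicator).
  assert (HN := pos_INR (countP (fun x => S x y) l)).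
  destruct (Rle_lt_dec (p y) 0) as [H0 | Hpos].
  - replace (p y) with 0 by (specialize (Hp y); lra). lra.
  - specialize (Hc y Hpos). split; nra.
Qed.

Lemma Pr_nonneg p S : (forall y, 0 <= p y) -> ex_series p -> 0 <= Pr p S.
Proof.
  intros Hp Hex. assert (HS := Pr_spec p S Hp Hex).
  rewrite <- (is_series_unique _ _ HS).
  rewrite <- (is_series_unique _ _ (is_series_single (fun _ => 0) 0%nat (fun _ _ => eq_refl))).
  apply Series_le; [| exists (Pr p S); exact HS].
  intros y. unfold restrict. destruct (excluded_middle_informative (S y)); split; auto; lra.
Qed.

Lemma Pr_RU_nonneg d Rz S : is_randomizer d Rz -> (0 < d)%nat -> 0 <= Pr (RU d Rz) S.
Proof.
  intros HR Hd. destruct (RU_distribution d Rz HR Hd) as [HRU0 HRU1].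
  apply Pr_nonneg; [exact HRU0 | exists 1; exact HRU1].
Qed.

Lemma expected_leak_le eps beta v k Rz : 0 < eps -> 0 < beta -> (0 < k)%nat -> 0 <= v <= 1 ->
  16 * (exp eps - 1) ^ 2 * ln (2 / beta) <= INR (2 * k) * v ^ 2 ->
  eps_private eps (2 * k) Rz ->
  lsum (ksubsets (2 * k) k) (fun H => Pr (RU (2 * k) Rz) (Leak v (2 * k) H Rz))
  <= beta * INR (length (ksubsets (2 * k) k)).
Proof.
  intros Heps Hbeta Hk Hv Hdv Hpriv.
  destruct (RU_distribution (2 * k) Rz (proj1 Hpriv) ltac:(lia)) as [HRU0 HRU1].
  apply lsum_Pr_le; [exact HRU0 | exact HRU1 |].
  intros y _. apply (count_leaky_le eps); auto.
  - intros x Hx. apply (proj1 Hpriv), Hx.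
  - intros x x' Hx Hx'. now apply (eps_private_pointwise eps (2 * k)).
Qed.

(* Markov's inequality for each [f i] followed by a union bound over [i < n]. *)
Lemma markov_union_bound {A} (l : list A) (f : nat -> A -> R) n delta c :
  0 < delta -> 0 < c -> (forall i x, (i < n)%nat -> 0 <= f i x) ->
  (forall i, (i < n)%nat -> lsum l (f i) <= delta * INR (length l)) ->
  (1 - / c) * INR (length l)
  <= INR (countP (fun x => forall i, (i < n)%nat -> f i x < c * delta * INR n) l).
Proof.
  intros Hdelta Hc Hf Hmean.
  set (K := c * delta * INR n).
  set (Bad x := exists i, (i < n)%nat /\ K <= f i x).
  assert (Hgood : le (countP (fun x => ~ Bad x) l)
                     (countP (fun x => forall i, (i < n)%nat -> f i x < K) l)).
  { apply countP_le_impl. intros x _ Hx i Hi. apply Rnot_le_lt. intros Hle.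
    apply Hx. exists i. split; assumption. }
  assert (Hsplit := countP_add_not Bad l).
  apply le_INR in Hgood. apply (f_equal INR) in Hsplit. rewrite plus_INR in Hsplit.
  assert (Hbad : c * INR (countP Bad l) <= INR (length l)).
  { destruct n as [|n].
    { rewrite countP_none; [simpl; rewrite Rmult_0_r; apply pos_INR |].
      intros x _ [i [Hi _]]. lia. }
    assert (Hn : 0 < INR (S n)) by (apply lt_0_INR; lia).
    assert (HK : 0 < K) by (apply Rmult_lt_0_compat; [nra | exact Hn]).
    assert (Hunion := countP_exists_le (fun i x => K <= f i x) l (S n)
                        (INR (length l) / (c * INR (S n)))).
    replace (INR (length l)) with (c * (INR (S n) * (INR (length l) / (c * INR (S n)))))
      by (field; split; lra).
    apply Rmult_le_compat_l; [lra |]. apply Hunion. intros i Hi.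
    assert (Hm := markov_countP l (f i) K (Rlt_le _ _ HK) (fun x _ => Hf i x Hi)).
    specialize (Hmean i Hi).
    apply (Rmult_le_reg_r K); [exact HK |].
    replace (INR (length l) / (c * INR (S n)) * K) with (delta * INR (length l))
      by (unfold K; field; split; lra).
    lra. }
  apply (Rmult_le_reg_l c); [exact Hc |].
  replace (c * ((1 - / c) * INR (length l))) with (c * INR (length l) - INR (length l))
    by (field; lra).
  assert (Hlen := pos_INR (length l)). nra.
Qed.

Lemma leak_radius_bounds eps beta d v : 0 < eps -> 0 < beta < 1 ->
  INR d > 4 * (exp (2 * eps) - 1) ^ 2 * ln (2 / beta) ->
  v = (exp (2 * eps) - 1) * sqrt (4 / INR d * ln (2 / beta)) ->
  (0 < d)%nat /\ 0 <= v <= 1 /\ 16 * (exp eps - 1) ^ 2 * ln (2 / beta) <= INR d * v ^ 2.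
Proof.
  intros Heps Hbeta Hd ->.
  set (L := ln (2 / beta)) in *.
  assert (HL : 0 < L).
  { unfold L. rewrite <- ln_1. apply ln_increasing; [lra |].
    apply (Rmult_lt_reg_r beta); [lra |]. unfold Rdiv. rewrite Rmult_assoc, Rinv_l; lra. }
  assert (He : 1 < exp eps) by (rewrite <- exp_0; apply exp_increasing, Heps).
  assert (He2 : exp (2 * eps) - 1 = (exp eps - 1) * (exp eps + 1)).
  { replace (2 * eps) with (eps + eps) by ring. rewrite exp_plus. ring. }
  assert (Hsq : 0 < (exp (2 * eps) - 1) ^ 2) by (rewrite He2; apply pow_lt; nra).
  assert (HdR : 0 < INR d) by nra.
  assert (Hdv : INR d * ((exp (2 * eps) - 1) * sqrt (4 / INR d * L)) ^ 2
                = 4 * (exp (2 * eps) - 1) ^ 2 * L).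
  { rewrite Rpow_mult_distr, pow2_sqrt; [field; lra |].
    apply Rmult_le_pos; [apply Rmult_le_pos; [lra | left; apply Rinv_0_lt_compat, HdR] | lra]. }
  assert (Hv0 : 0 <= (exp (2 * eps) - 1) * sqrt (4 / INR d * L)).
  { apply Rmult_le_pos; [rewrite He2; nra | apply sqrt_pos]. }
  assert (Hv1 : ((exp (2 * eps) - 1) * sqrt (4 / INR d * L)) ^ 2 < 1).
  { apply (Rmult_lt_reg_l (INR d)); [exact HdR |]. rewrite Hdv. lra. }
  split; [apply INR_lt; simpl; lra |]. split; [split; [exact Hv0 | nra] |].
  rewrite Hdv, He2, Rpow_mult_distr.
  assert (4 <= (exp eps + 1) ^ 2) by nra.
  assert (0 <= (exp eps - 1) ^ 2 * L * ((exp eps + 1) ^ 2 - 4)).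
  { apply Rmult_le_pos; [apply Rmult_le_pos; [apply pow2_ge_0 |] |]; lra. }
  nra.
Qed.

Lemma half_subsets_double k : half_subsets (2 * k) = ksubsets (2 * k) k.
Proof. unfold half_subsets. now rewrite Nat.mul_comm, Nat.div_mul. Qed.

Theorem mainTheorem7 (eps beta : R) (d n : nat) (Rs : nat -> nat -> nat -> R)
  (Heps : 0 < eps) (Hbeta : 0 < beta < 1)
  (Heven : Nat.Even d)
  (Hd : INR d > 4 * (exp (2 * eps) - 1) ^ 2 * ln (2 / beta))
  (Hpriv : forall i, (i < n)%nat -> eps_private eps d (Rs i)) :
  let v := (exp (2 * eps) - 1) * sqrt (4 / INR d * ln (2 / beta)) in
  prob_H d (fun H => forall i, (i < n)%nat ->
              Pr (RU d (Rs i)) (Leak v d H (Rs i)) < 6 * beta * INR n) >= 5 / 6.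
Proof.
  intros v.
  destruct (leak_radius_bounds eps beta d v Heps Hbeta Hd eq_refl) as [Hd0 [Hv Hdv]].
  destruct Heven as [k ->].
  assert (Hgood := markov_union_bound (ksubsets (2 * k) k)
    (fun i H => Pr (RU (2 * k) (Rs i)) (Leak v (2 * k) H (Rs i))) n beta 6 (proj1 Hbeta)
    ltac:(lra) (fun i H Hi => Pr_RU_nonneg _ _ _ (proj1 (Hpriv i Hi)) Hd0)
    (fun i Hi => expected_leak_le eps beta v k (Rs i) Heps (proj1 Hbeta) ltac:(lia)
                   Hv Hdv (Hpriv i Hi))).
  assert (Hl : 0 < INR (length (ksubsets (2 * k) k)))
    by (apply lt_0_INR, length_ksubsets_pos; lia).
  unfold prob_H. rewrite half_subsets_double.
  apply Rle_ge, (Rle_div_r (5 / 6)); [exact Hl |].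
  eapply Rle_trans; [| exact Hgood]. lra.
Qed.
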